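(* There is a function $g$ such that the following holds. Let $A \in \mathbb{Z}^{m \times n}$ and let $F$ be a td-decomposition of the dual graph $G_D(A)$. Let $A_B \in \mathbb{Z}^{m \times m}$ be a submatrix of $A$ formed by a collection of $m$ columns of $A$ which is invertible. Then $\mathrm{fr}(A_B^{-1}) \le g(\mathrm{height}(F), \|A\|_\infty)$.
   Context: The primal graph $G_P(M)$ of a matrix $M$ has one vertex per column of $M$, two columns adjacent if some row has non-zero entries in both; the dual graph is $G_D(A) := G_P(A^{\intercal})$ (vertices are rows of $A$, adjacent if some column has non-zero entries in both). For a rooted tree $F$, $\mathrm{cl}(F)$ is the graph obtained by making each vertex adjacent to all its ancestors; $\mathrm{height}(F)$ is the maximum number of vertices on a root-leaf path. A td-decomposition of a graph $G$ is a rooted tree $F$ on the vertex set of $G$ with $G \subseteq \mathrm{cl}(F)$. For a rational matrix $M$, $\mathrm{fr}(M)$ is the maximum denominator among its entries written in lowest terms. *)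

From mathcomp Require Import all_boot all_order all_algebra.
Set Implicit Arguments. Unset Strict Implicit. Unset Printing Implicit Defensive.
Import Order.TTheory GRing.Theory Num.Theory.
Local Open Scope ring_scope.

(* A rooted tree on the vertex set 'I_m, given by a parent function
   (None = the root). *)
Record rtree (m : nat) := RTree { parent : 'I_m -> option 'I_m }.

Fixpoint iterp m (F : rtree m) (k : nat) (v : 'I_m) : option 'I_m :=
  match k with
  | 0%N => Some v
  | k'.+1 => obind (parent F) (iterp F k' v)
  end.

(* u is a proper ancestor of v (paths have fewer than m edges in an acyclic tree) *)
Definition ancestor m (F : rtree m) (u v : 'I_m) : bool :=
  [exists k : 'I_m, iterp F k.+1 v == Some u].

Definition is_rooted_tree m (F : rtree m) : Prop :=
  (forall (v : 'I_m) (k : nat), iterp F k.+1 v <> Some v) /\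
  (forall u v : 'I_m, parent F u = None -> parent F v = None -> u = v).

(* height = max number of vertices on a root-leaf path *)
Definition height m (F : rtree m) : nat :=
  (\max_(v : 'I_m) (#|[set u | ancestor F u v]|).+1)%N.

Definition cl_adj m (F : rtree m) (u v : 'I_m) : bool :=
  ancestor F u v || ancestor F v u.

Definition dual_adj m n (A : 'M[int]_(m, n)) (i j : 'I_m) : bool :=
  (i != j) && [exists c : 'I_n, (A i c != 0) && (A j c != 0)].

Definition td_decomposition_dual m n (A : 'M[int]_(m, n)) (F : rtree m) : Prop :=
  is_rooted_tree F /\ (forall i j, dual_adj A i j -> cl_adj F i j).

Definition maxnorm m n (A : 'M[int]_(m, n)) : nat :=
  (\max_(i : 'I_m) \max_(j : 'I_n) `|A i j|%N)%N.

Definition fr m n (M : 'M[rat]_(m, n)) : nat :=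
  (\max_(i : 'I_m) \max_(j : 'I_n) `|denq (M i j)|%N)%N.

(* Let x be the j-th column of A_B^-1. Clearing denominators, (d x, -d) is a nonzero
   integer kernel vector of the augmented matrix [A_B | e_j], whose dual graph still lies
   in cl(F). Any Graver element g of this matrix is a kernel vector with last entry
   g_last <> 0, and A_B g' = - g_last e_j forces g' = - g_last x: every denominator of x
   divides g_last, so fr(A_B^-1) is bounded by the 1-norm of Graver elements.
   That 1-norm is bounded by induction on the height, peeling off the top layer of F:
   a Graver element for the rows of depth >= j is a conformal sum of Graver elements for
   the rows of depth > j; since distinct subtrees rooted at depth j meet disjoint sets of
   columns, only one row of depth j sees its support, and a one-dimensional Steinitz
   argument bounds the number of summands. *)

From mathcomp Require Import all_boot all_order all_algebra zify ring.
From Stdlib Require Import Classical.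
Import Order.TTheory GRing.Theory Num.Theory.
Set Implicit Arguments. Unset Strict Implicit. Unset Printing Implicit Defensive.

Section Ancestors.
Variables (m : nat) (F : rtree m).
Hypothesis F_acyclic : forall (v : 'I_m) (k : nat), iterp F k.+1 v <> Some v.

Lemma iterpD a b v : iterp F (a + b) v = obind (iterp F a) (iterp F b v).
Proof. by elim: a => [|a IH] /=; [case: (iterp F b v) | rewrite IH; case: (iterp F b v)]. Qed.

Lemma iterpSr k v : iterp F k.+1 v = obind (iterp F k) (parent F v).
Proof. by rewrite -addn1 iterpD. Qed.

(* An ancestor chain of length m would visit m + 1 vertices of 'I_m. *)
Lemma iterp_none k v : (m <= k)%N -> iterp F k v = None.
Proof.
move=> le_m_k; case Ek: (iterp F k v) => [w|] //; exfalso.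
have iterp_le i : (i <= k)%N -> exists u, iterp F i v = Some u.
  move=> le_ik; case Ei: (iterp F i v) => [u|]; first by exists u.
  by move: Ek; rewrite -(subnK le_ik) iterpD Ei.
pose walk (i : 'I_m.+1) : 'I_m := odflt v (iterp F i v).
have walkE (i : 'I_m.+1) : Some (walk i) = iterp F i v.
  have [u Eu] := iterp_le i (leq_trans (ltnSE (ltn_ord i)) le_m_k).
  by rewrite /walk Eu.
have walk_lt (i i' : 'I_m.+1) : (i < i')%N -> walk i <> walk i'.
  move=> lt_ii' eq_w; apply: (@F_acyclic (walk i) (i' - i).-1).
  have E := walkE i'; rewrite -(subnK (ltnW lt_ii')) iterpD -walkE -eq_w in E.
  by rewrite prednK ?subn_gt0.
have walk_inj : injective walk.
  move=> i i' eq_w; apply/val_inj; case: (ltngtP i i') => // lt_i.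
    by case: (walk_lt i i' lt_i eq_w).
  by case: (walk_lt i' i lt_i (esym eq_w)).
by have := @leq_card _ _ walk walk_inj; rewrite !card_ord ltnn.
Qed.

Lemma ancestorP u v : reflect (exists k, iterp F k.+1 v = Some u) (ancestor F u v).
Proof.
apply: (iffP existsP) => [[k /eqP]|[k Ek]]; first by exists k.
have lt_km : (k < m)%N.
  by rewrite ltnNge; apply/negP => le_mk; rewrite iterp_none ?(leq_trans le_mk) in Ek.
by exists (Ordinal lt_km); apply/eqP.
Qed.

Lemma ancestor_trans : transitive (ancestor F).
Proof.
move=> u w v /ancestorP[k1 E1] /ancestorP[k2 E2]; apply/ancestorP.
by exists (k1.+1 + k2); rewrite -addnS iterpD E2.
Qed.

Lemma ancestor_irr u : ~~ ancestor F u u.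
Proof. by apply/negP => /ancestorP[k]; apply: F_acyclic. Qed.

Lemma ancestor_parent u v :
  ancestor F u v = if parent F v is Some p then (u == p) || ancestor F u p else false.
Proof.
apply/ancestorP/idP => [[k]|].
  rewrite iterpSr; case: (parent F v) => [p|] //=.
  by case: k => [[->]|k Ek]; rewrite ?eqxx //; apply/orP; right; apply/ancestorP; exists k.
case Ev: (parent F v) => [p|] // /orP[/eqP->|/ancestorP[k Ek]].
  by exists 0; rewrite iterpSr Ev.
by exists k.+1; rewrite iterpSr Ev.
Qed.

Lemma ancestor_total u1 u2 v : ancestor F u1 v -> ancestor F u2 v -> u1 != u2 ->
  ancestor F u1 u2 || ancestor F u2 u1.
Proof.
move=> /ancestorP[k1 E1] /ancestorP[k2 E2] ne_u.
wlog lt_k : u1 u2 k1 k2 E1 E2 ne_u / (k2 < k1)%N.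
  move=> W; case: (ltngtP k1 k2) => [lt|lt|eq_k].
  - by rewrite orbC; apply: (W u2 u1 k2 k1); rewrite // eq_sym.
  - exact: (W u1 u2 k1 k2).
  - by move: E2 ne_u; rewrite -eq_k E1 => -[->]; rewrite eqxx.
apply/orP; left; apply/ancestorP; exists (k1 - k2).-1.
rewrite prednK ?subn_gt0 // -E1.
have -> : k1.+1 = (k1 - k2 + k2.+1)%N by rewrite addnS subnK // ltnW.
by rewrite iterpD E2.
Qed.

Definition depth v := #|[set u | ancestor F u v]|.

Definition in_subtree r v := (r == v) || ancestor F r v.

Lemma in_subtree_refl r : in_subtree r r.
Proof. by rewrite /in_subtree eqxx. Qed.

Lemma in_subtree_trans r v v' : in_subtree r v -> ancestor F v v' -> in_subtree r v'.
Proof.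
case/orP => [/eqP-> anc_vv'|anc_rv anc_vv']; apply/orP; right => //.
exact: ancestor_trans anc_rv anc_vv'.
Qed.

Lemma depth_lt u v : ancestor F u v -> (depth u < depth v)%N.
Proof.
move=> anc_uv; apply/proper_card/properP; split.
  by apply/subsetP => w; rewrite !inE => anc_wu; apply: ancestor_trans anc_wu anc_uv.
by exists u; rewrite !inE ?anc_uv ?ancestor_irr.
Qed.

Lemma depth_parent v :
  depth v = if parent F v is Some p then (depth p).+1 else 0.
Proof.
rewrite /depth; case Ev: (parent F v) => [p|].
  have -> : [set u | ancestor F u v] = p |: [set u | ancestor F u p].
    by apply/setP => u; rewrite !inE ancestor_parent Ev.
  by rewrite cardsU1 inE ancestor_irr.
by apply/eqP; rewrite cards_eq0; apply/eqP/setP => u; rewrite !inE ancestor_parent Ev.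
Qed.

Lemma in_subtree_depth j v : (j <= depth v)%N -> exists2 r, depth r = j & in_subtree r v.
Proof.
have [n] := ubnP (depth v); elim: n v => // n IH v lt_vn le_jv.
case: (ltngtP j (depth v)) le_jv => // [lt_jv _|eq_jv _]; last first.
  by exists v; rewrite ?eq_jv ?in_subtree_refl.
move: lt_jv lt_vn; rewrite depth_parent; case Ev: (parent F v) => [p|] // le_jp lt_pn.
have [r dr sub_rp] := IH p lt_pn le_jp.
by exists r => //; apply: in_subtree_trans sub_rp _; rewrite ancestor_parent Ev eqxx.
Qed.

Lemma in_subtree_depth_inj r r' v :
  in_subtree r v -> in_subtree r' v -> depth r = depth r' -> r = r'.
Proof.
move=> /orP[/eqP->|anc_rv] /orP[/eqP->|anc_r'v] eq_d //.
- by move: (depth_lt anc_r'v); rewrite eq_d ltnn.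
- by move: (depth_lt anc_rv); rewrite eq_d ltnn.
have [//|ne_r] := eqVneq r r'.
by case/orP: (ancestor_total anc_rv anc_r'v ne_r) => /depth_lt; rewrite eq_d ltnn.
Qed.
End Ancestors.

Local Open Scope ring_scope.

Lemma eq_mulmx_on_support (R : pzSemiRingType) p (w : 'rV[R]_p) (z z' : 'cV[R]_p) :
  (forall c, w 0 c != 0 -> z c 0 = z' c 0) -> w *m z = w *m z'.
Proof.
move=> wzz'; apply/matrixP => i k; rewrite !ord1 !mxE; apply: eq_bigr => c _.
by have [->|/wzz'->] := eqVneq (w 0 c) 0; rewrite ?mul0r.
Qed.

Section Conformal.
Variable p : nat.
Implicit Types z h u x y : 'cV[int]_p.

Definition in_orthant z h :=
  forall c, (0 <= z c 0 -> 0 <= h c 0) /\ (z c 0 <= 0 -> h c 0 <= 0).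

Definition conformal u z := in_orthant z u /\ in_orthant z (z - u).

Definition norm1 z : nat := \sum_c absz (z c 0%R).

Lemma in_orthant_refl z : in_orthant z z. Proof. by []. Qed.

Lemma in_orthant0 z : in_orthant z 0. Proof. by move=> c; rewrite mxE. Qed.

Lemma in_orthantD z x y : in_orthant z x -> in_orthant z y -> in_orthant z (x + y).
Proof.
move=> zx zy c; rewrite mxE; have := zx c; have := zy c.
by move: (z c 0) (x c 0) (y c 0) => a b d; lia.
Qed.

Lemma in_orthant_sum z (L : seq 'cV[int]_p) :
  (forall h, h \in L -> in_orthant z h) -> in_orthant z (\sum_(h <- L) h).
Proof.
move=> zL; rewrite big_seq; apply: (big_ind (in_orthant z)) => //.
  exact: in_orthant0.
exact: in_orthantD.
Qed.

Lemma in_orthant_trans z y h : in_orthant z y -> in_orthant y h -> in_orthant z h.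
Proof.
move=> zy yh c; have := zy c; have := yh c.
by move: (z c 0) (y c 0) (h c 0) => a b d; lia.
Qed.

Lemma in_orthant_eq0 z h c : in_orthant z h -> z c 0 = 0 -> h c 0 = 0.
Proof. by move=> /(_ c); move: (z c 0) (h c 0) => a b; lia. Qed.

Lemma conformal_refl z : conformal z z.
Proof. by rewrite /conformal subrr; split; [apply: in_orthant_refl | apply: in_orthant0]. Qed.

Lemma conformal_trans u y z : conformal u y -> conformal y z -> conformal u z.
Proof.
move=> [yu yyu] [zy zzy]; split; first exact: in_orthant_trans zy yu.
have -> : z - u = (z - y) + (y - u) by rewrite addrA subrK.
by apply: in_orthantD => //; apply: in_orthant_trans zy yyu.
Qed.

Lemma norm1_eq0 z : (norm1 z == 0)%N = (z == 0).
Proof.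
rewrite /norm1 sum_nat_eq0; apply/forallP/eqP => [z0|-> c]; last by rewrite mxE.
apply/matrixP => c i; rewrite ord1 mxE; apply/eqP.
by rewrite -absz_eq0; apply: (implyP (z0 c)).
Qed.

Lemma norm1D z x y : in_orthant z x -> in_orthant z y -> norm1 (x + y) = (norm1 x + norm1 y)%N.
Proof.
move=> zx zy; rewrite /norm1 -big_split /=; apply: eq_bigr => c _.
rewrite mxE; have := zx c; have := zy c.
by move: (z c 0) (x c 0) (y c 0) => a b d; lia.
Qed.

Lemma norm1_sum z (L : seq 'cV[int]_p) : (forall h, h \in L -> in_orthant z h) ->
  norm1 (\sum_(h <- L) h) = (\sum_(h <- L) norm1 h)%N.
Proof.
elim: L => [|h L IH] zL; first by rewrite !big_nil; apply/eqP; rewrite norm1_eq0.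
have zL' h' : h' \in L -> in_orthant z h' by move=> hL; apply: zL; rewrite inE hL orbT.
rewrite !big_cons (norm1D (zL _ (mem_head _ _))) ?IH //.
exact: in_orthant_sum.
Qed.

Lemma norm1_conformal u z : conformal u z -> norm1 z = (norm1 u + norm1 (z - u))%N.
Proof. by case=> zu zzu; rewrite -(norm1D zu zzu) addrC subrK. Qed.

Lemma sum_in_orthant_neq0 z (L : seq 'cV[int]_p) h : (forall h, h \in L -> in_orthant z h) ->
  h \in L -> h != 0 -> \sum_(h <- L) h != 0.
Proof.
move=> zL hL; rewrite -!norm1_eq0 (norm1_sum zL) sum_nat_seq_eq0 -!lt0n => nz_h.
by apply/allPn; exists h; rewrite // -lt0n.
Qed.

Lemma norm_mulmx_le (w : 'rV[int]_p) h (D : nat) :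
  (forall c, `|w 0 c| <= D%:Z) -> `|(w *m h) 0 0| <= (D * norm1 h)%N%:Z.
Proof.
move=> wD; rewrite mxE /norm1 PoszM (big_morph Posz PoszD (erefl 0%:Z)) mulr_sumr.
apply: le_trans (ler_norm_sum _ _ _) _; apply: ler_sum => c _.
by rewrite normrM abszE ler_wpM2r.
Qed.
Lemma mulmx_conformal_eq0 (w : 'rV[int]_p) s g :
  conformal s g -> (forall c, w 0 c != 0 -> g c 0 = 0) -> w *m s = 0.
Proof.
move=> [gs _] wg; rewrite -(mulmx0 _ w); apply: eq_mulmx_on_support => c /wg g0.
by rewrite mxE (in_orthant_eq0 gs g0).
Qed.

Lemma leq_abs_norm1 z c : leq (absz (z c 0)) (norm1 z).
Proof. by rewrite /norm1 (bigD1 c) //= leq_addr. Qed.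

End Conformal.

Section Graver.
Variables (m p : nat) (N : 'M[int]_(m, p)).
Implicit Types (S : pred 'I_m) (z g u : 'cV[int]_p).

Definition in_ker S z := forall v, S v -> row v N *m z = 0.

Definition graver S g :=
  [/\ g != 0, in_ker S g & forall u, conformal u g -> in_ker S u -> u != 0 -> u = g].

Lemma in_kerB S z u : in_ker S z -> in_ker S u -> in_ker S (z - u).
Proof. by move=> Sz Su v Sv; rewrite mulmxBr Sz // Su // subr0. Qed.

Lemma in_ker_sum S (L : seq 'cV[int]_p) :
  (forall h, h \in L -> in_ker S h) -> in_ker S (\sum_(h <- L) h).
Proof. by move=> SL v Sv; rewrite mulmx_sumr big_seq big1 // => h /SL->. Qed.

Lemma in_ker_subset S S' z : (forall v, S' v -> S v) -> in_ker S z -> in_ker S' z.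
Proof. by move=> sS'S Sz v /sS'S; apply: Sz. Qed.

Lemma exists_graver_conformal S z : z != 0 -> in_ker S z -> exists2 g, graver S g & conformal g z.
Proof.
have [n] := ubnP (norm1 z); elim: n z => // n IH z lt_zn nz_z Sz.
case: (classic (exists u, [/\ conformal u z, in_ker S u, u != 0 & u != z])).
  move=> [u [uz Su nz_u ne_uz]].
  have lt_uz : (norm1 u < norm1 z)%N.
    rewrite (norm1_conformal uz) -[X in (X < _)%N]addn0 ltn_add2l lt0n norm1_eq0 subr_eq0.
    by rewrite eq_sym.
  have [g gS gu] := IH u (leq_trans lt_uz (ltnSE lt_zn)) nz_u Su.
  by exists g => //; apply: conformal_trans gu uz.
move=> no_u; exists z; last exact: conformal_refl.
apply: And3 => // u uz Su nz_u; apply/eqP/negPn/negP => ne_uz.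
by apply: no_u; exists u.
Qed.

Lemma graver_decomposition S z : in_ker S z ->
  exists L, (forall h, h \in L -> graver S h /\ in_orthant z h) /\ \sum_(h <- L) h = z.
Proof.
have [n] := ubnP (norm1 z); elim: n z => // n IH z lt_zn Sz.
have [->|nz_z] := eqVneq z 0; first by exists [::]; rewrite big_nil.
have [g gS [zg zzg]] := exists_graver_conformal nz_z Sz.
have [nz_g Sg _] := gS.
have lt_zg : (norm1 (z - g) < norm1 z)%N.
  by rewrite (norm1_conformal (conj zg zzg)) -[X in (X < _)%N]add0n ltn_add2r lt0n norm1_eq0.
have [L [LS sumL]] := IH (z - g) (leq_trans lt_zg (ltnSE lt_zn)) (in_kerB Sz Sg).
exists (g :: L); split; last by rewrite big_cons sumL addrC subrK.
move=> h; rewrite inE => /predU1P[->|hL]; first by [].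
by have [hS zgh] := LS h hL; split => //; apply: in_orthant_trans zzg zgh.
Qed.
Lemma in_ker_all S z : (forall v, S v) -> in_ker S z <-> N *m z = 0.
Proof.
move=> allS; split => [Sz|Nz v _]; last by rewrite -row_mul Nz row0.
by apply/row_matrixP => v; rewrite row_mul row0 Sz.
Qed.

Lemma norm1_graver_no_rows S g : (forall v, ~~ S v) -> graver S g -> norm1 g = 1%N.
Proof.
move=> noS [nz_g _ min_g].
have /existsP[c nz_gc] : [exists c, g c 0 != 0].
  apply: contraNT nz_g => /existsPn g0; apply/eqP/matrixP => c i.
  by rewrite ord1 mxE; apply/eqP/negPn/g0.
pose u : 'cV[int]_p := \col_c' (if c' == c then (if 0 < g c 0 then 1 else -1) else 0).
have u_conf : conformal u g.
  split=> c'; rewrite !mxE; case: (c' =P c) => [->|_]; rewrite ?subr0 //;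
    by move: nz_gc; case: ifP; move: (g c 0) => a; lia.
have nz_u : u != 0.
  by apply: contraNneq nz_gc => /matrixP/(_ c 0); rewrite !mxE eqxx; case: ifP.
rewrite -(min_g u u_conf _ nz_u) => [|v]; last by rewrite (negbTE (noS v)).
rewrite /norm1 (bigD1 c) //= big1 => [|c' ne_c'c]; rewrite mxE ?(negbTE ne_c'c) //.
by rewrite eqxx; case: ifP.
Qed.
End Graver.

Section Steinitz.
Variables (T : eqType) (w : T -> int) (K : nat).
Implicit Types (L : seq T) (s : int).

Lemma steinitz_pick L s : L != [::] -> (forall x, x \in L -> `|w x| <= K%:Z) ->
  `|s| <= K%:Z -> s + \sum_(x <- L) w x = 0 -> exists2 x, x \in L & `|s + w x| <= K%:Z.
Proof.
move=> nz_L wK sK sum0.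
have [s_gt0|s_le0] := ltrP 0 s.
  case: (boolP (has (fun x => w x < 0) L)) => [/hasP[x xL wx_lt0]|/hasPn L_ge0].
    by exists x => //; move: (wK x xL) wx_lt0 sK s_gt0; move: (w x) => a; lia.
  have : 0 <= \sum_(x <- L) w x.
    by rewrite big_seq sumr_ge0 // => x /L_ge0; rewrite -leNgt.
  by move: sum0 s_gt0; lia.
case: (boolP (has (fun x => 0 <= w x) L)) => [/hasP[x xL wx_ge0]|/hasPn L_lt0].
  by exists x => //; move: (wK x xL) wx_ge0 sK s_le0; move: (w x) => a; lia.
case: L nz_L sum0 L_lt0 {wK} => // y L _; rewrite big_cons => sum0 L_lt0.
have : w y < 0 by rewrite ltNge L_lt0 ?mem_head.
have : \sum_(x <- L) w x <= 0.
  by rewrite big_seq sumr_le0 // => x xL; rewrite ltW // ltNge L_lt0 // inE xL orbT.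
by move: sum0 s_le0; move: (w y) (\sum_(x <- L) w x) => a b; lia.
Qed.

Lemma steinitz_reorder L s : (forall x, x \in L -> `|w x| <= K%:Z) ->
  `|s| <= K%:Z -> s + \sum_(x <- L) w x = 0 ->
  exists2 L', perm_eq L L' & forall i, `|s + \sum_(x <- take i L') w x| <= K%:Z.
Proof.
have [n] := ubnP (size L); elim: n L s => // n IH L s lt_Ln wK sK sum0.
have [->|nz_L] := eqVneq L [::].
  by exists [::] => // i; rewrite big_nil addr0.
have [x xL sxK] := steinitz_pick nz_L wK sK sum0.
have L_x := perm_to_rem xL.
have lt_rem_n : (size (rem x L) < n)%N.
  by rewrite size_rem // -ltnS prednK ?lt0n ?size_eq0.
have remK x' : x' \in rem x L -> `|w x'| <= K%:Z by move/mem_rem; apply: wK.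
have sum_rem0 : s + w x + \sum_(x' <- rem x L) w x' = 0.
  by move: sum0; rewrite (perm_big _ L_x) big_cons addrA.
have [L' L'_x L'K] := IH (rem x L) (s + w x) lt_rem_n remK sxK sum_rem0.
exists (x :: L'); first by rewrite (perm_trans L_x) // perm_cons.
by case=> [|i]; rewrite ?big_nil ?addr0 //= big_cons addrA.
Qed.

(* Pigeonhole on the 2K + 1 possible values of the prefix sums of a Steinitz ordering. *)
Lemma zero_sum_split L : (forall x, x \in L -> `|w x| <= K%:Z) -> \sum_(x <- L) w x = 0 ->
  (K.*2.+2 <= size L)%N ->
  exists B C, [/\ perm_eq L (B ++ C), B != [::], C != [::] & \sum_(x <- B) w x = 0].
Proof.
move=> wK sum0 size_L.
have K0 : `|0 : int| <= K%:Z by rewrite normr0.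
have [L' L_L' L'K] := steinitz_reorder wK K0 (etrans (add0r _) sum0).
pose ps i := \sum_(x <- take i L') w x.
have psK i : `|ps i| <= K%:Z by have := L'K i; rewrite add0r.
pose idx i := absz (ps i + K%:Z).
have idx_inj i i' : idx i = idx i' -> ps i = ps i'.
  by rewrite /idx; move: (psK i) (psK i'); move: (ps i) (ps i') => a b; lia.
have /(uniqPn 0%N)[i [i' [lt_ii' lt_i'L']]] : ~~ uniq (mkseq idx (size L')).
  apply/negP => /(@uniq_leq_size _ _ (iota 0 K.*2.+1)) le_size.
  suff: (size L' <= K.*2.+1)%N by rewrite leqNgt -(perm_size L_L') size_L.
  rewrite -[X in (X <= _)%N](size_mkseq idx) -[X in (_ <= X)%N](size_iota 0).
  apply: le_size => _ /mapP[k _ ->]; rewrite mem_iota add0n ltnS /idx.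
  by move: (psK k); move: (ps k) => a; lia.
rewrite size_mkseq in lt_i'L'.
rewrite !nth_mkseq ?(ltn_trans lt_ii') // => /idx_inj eq_ps.
exists (take (i' - i) (drop i L')), (take i L' ++ drop i' L'); split.
- rewrite (perm_trans L_L') // perm_sym perm_catCA.
  have -> : drop i' L' = drop (i' - i) (drop i L') by rewrite drop_drop subnK // ltnW.
  by rewrite !cat_take_drop.
- rewrite -size_eq0 size_take size_drop.
  by case: ifP; rewrite subn_eq0 -ltnNge // (ltn_trans lt_ii').
- by rewrite -size_eq0 size_cat size_drop addn_eq0 subn_eq0 leqNgt lt_i'L' andbF.
- rewrite /ps -(subnKC (ltnW lt_ii')) takeD big_cat /= in eq_ps.
  by apply: (@addrI _ (ps i)); rewrite addr0 /ps -eq_ps.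
Qed.
End Steinitz.

Definition augment m p (M : 'M[int]_(m, p)) (j : 'I_m) : 'M[int]_(m, p + 1) :=
  row_mx M (delta_mx j 0).

Lemma leq_maxnorm m n (A : 'M[int]_(m, n)) i k : leq (absz (A i k)) (maxnorm A).
Proof.
apply: leq_trans (leq_bigmax i).
exact: (@leq_bigmax _ (fun k => absz (A i k)) k).
Qed.

Lemma maxnorm_colsub m n p (A : 'M[int]_(m, n)) (f : 'I_p -> 'I_n) :
  (maxnorm (colsub f A) <= maxnorm A)%N.
Proof. by apply/bigmax_leqP => i _; apply/bigmax_leqP => k _; rewrite mxE leq_maxnorm. Qed.

Lemma maxnorm_augment m p (M : 'M[int]_(m, p)) j :
  (maxnorm (augment M j) <= maxn (maxnorm M) 1)%N.
Proof.
apply/bigmax_leqP => i _; apply/bigmax_leqP => k _.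
rewrite /augment -(splitK k); case: (split k) => [c|c] /=.
  by rewrite row_mxEl (leq_trans (leq_maxnorm M i c)) ?leq_maxl.
by rewrite row_mxEr mxE; case: (_ && _); rewrite ?leq_maxr.
Qed.

Lemma dual_adj_colsub m n p (A : 'M[int]_(m, n)) (f : 'I_p -> 'I_n) v v' :
  dual_adj (colsub f A) v v' -> dual_adj A v v'.
Proof.
case/andP=> ne_vv' /existsP[c]; rewrite !mxE => nz_vv'.
by rewrite /dual_adj ne_vv'; apply/existsP; exists (f c).
Qed.

Lemma dual_adj_augment m p (M : 'M[int]_(m, p)) j v v' :
  dual_adj (augment M j) v v' -> dual_adj M v v'.
Proof.
case/andP=> ne_vv' /existsP[k]; rewrite /dual_adj ne_vv' /augment -(splitK k).
case: (split k) => [c|c] /=; first by rewrite !row_mxEl => nz_vv'; apply/existsP; exists c.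
rewrite !row_mxEr !mxE !pnatr_eq0 -!lt0n !lt0b => /andP[/andP[/eqP vj _] /andP[/eqP v'j _]].
by rewrite vj v'j eqxx in ne_vv'.
Qed.

Fixpoint graver_bound (D t : nat) : nat :=
  if t is t'.+1 then ((D * graver_bound D t').*2.+1 * graver_bound D t')%N else 1%N.

Section TreeGraver.
Variables (m p : nat) (N : 'M[int]_(m, p)) (F : rtree m) (D : nat).
Hypothesis F_acyclic : forall (v : 'I_m) (k : nat), iterp F k.+1 v <> Some v.
Hypothesis N_dual_in_cl : forall v v', dual_adj N v v' -> cl_adj F v v'.
Hypothesis N_bounded : (maxnorm N <= D)%N.
Implicit Types (g s : 'cV[int]_p).

Definition below j : pred 'I_m := fun v => (j <= depth F v)%N.

Definition subtree_col r c := [exists v, in_subtree F r v && (N v c != 0)].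

Lemma subtree_colP r v c : in_subtree F r v -> N v c != 0 -> subtree_col r c.
Proof. by move=> rv nz_v; apply/existsP; exists v; rewrite rv. Qed.

Lemma subtree_col_inj r r' c :
  depth F r = depth F r' -> subtree_col r c -> subtree_col r' c -> r = r'.
Proof.
move=> eq_d /existsP[v /andP[rv nz_v]] /existsP[v' /andP[r'v' nz_v']].
have [eq_vv'|ne_vv'] := eqVneq v v'.
  by rewrite -eq_vv' in r'v'; apply: (in_subtree_depth_inj F_acyclic rv r'v' eq_d).
have /N_dual_in_cl/orP[vv'|v'v] : dual_adj N v v'.
  by rewrite /dual_adj ne_vv'; apply/existsP; exists c; rewrite nz_v nz_v'.
  exact: (in_subtree_depth_inj F_acyclic (in_subtree_trans F_acyclic rv vv') r'v' eq_d).
exact: (in_subtree_depth_inj F_acyclic rv (in_subtree_trans F_acyclic r'v' v'v) eq_d).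
Qed.

(* Restricting g to the columns met by the subtree of r gives an element of the same
   kernel below g, so by minimality g lives entirely on those columns. *)
Lemma graver_support_subtree j g r c0 : graver N (below j) g -> depth F r = j ->
  g c0 0 != 0 -> N r c0 != 0 -> forall c, g c 0 != 0 -> subtree_col r c.
Proof.
move=> [nz_g Sg min_g] dr nz_gc0 nz_rc0.
pose gr : 'cV[int]_p := \col_c (if subtree_col r c then g c 0 else 0).
have gr_conf : conformal gr g.
  by split=> c; rewrite !mxE; case: ifP; rewrite ?subr0 ?subrr // => _; move: (g c 0); lia.
have nz_gr : gr != 0.
  apply: contraNneq nz_gc0 => /matrixP/(_ c0 0); rewrite !mxE.
  by rewrite (subtree_colP (in_subtree_refl _ r) nz_rc0) => ->.
have gr_ker : in_ker N (below j) gr.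
  move=> v jv; have [u du uv] := in_subtree_depth F_acyclic jv.
  have [eq_ur|ne_ur] := eqVneq u r.
    rewrite eq_ur in uv; rewrite -(Sg v jv); apply: eq_mulmx_on_support => c; rewrite !mxE => nz_vc.
    by rewrite (subtree_colP uv nz_vc).
  rewrite -(mulmx0 _ (row v N)); apply: eq_mulmx_on_support => c; rewrite !mxE => nz_vc.
  case: ifP => // rc; case/eqP: ne_ur.
  by apply: subtree_col_inj (subtree_colP uv nz_vc) rc; rewrite du.
move=> c; rewrite -(min_g gr gr_conf gr_ker nz_gr) mxE.
by case: ifP; rewrite ?eqxx.
Qed.

(* Within a Graver element for the rows of depth >= j, the rows of depth exactly j act
   like the single row w: at most one of them meets the support of g. *)
Lemma graver_layer_row j g : graver N (below j) g ->
  exists w : 'rV[int]_p, [/\ forall c, `|w 0 c| <= D%:Z, w *m g = 0 &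
    forall s, conformal s g -> in_ker N (below j.+1) s -> w *m s = 0 -> in_ker N (below j) s].
Proof.
move=> gS; have [_ Sg _] := gS.
have layer_ker s : in_ker N (below j.+1) s -> (forall v, depth F v = j -> row v N *m s = 0) ->
    in_ker N (below j) s.
  by move=> s_ker s_layer v; rewrite /below leq_eqVlt => /orP[/eqP/esym/s_layer|/s_ker].
pose loud r := (depth F r == j) && [exists c, (g c 0 != 0) && (N r c != 0)].
have [/existsP[r /andP[/eqP dr /existsP[c0 /andP[nz_gc0 nz_rc0]]]]|quiet] :=
  boolP [exists r, loud r].
  exists (row r N); split=> [c||s s_conf s_ker rs].
  - by rewrite mxE -abszE lez_nat (leq_trans (leq_maxnorm N r c)).
  - by apply: Sg; rewrite /below dr.
  apply: layer_ker => // v dv; have [->|ne_vr] := eqVneq v r; first exact: rs.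
  apply: mulmx_conformal_eq0 s_conf _ => c; rewrite mxE => nz_vc; apply/eqP/negPn/negP => nz_gc.
  case/eqP: ne_vr; apply: subtree_col_inj (subtree_colP (in_subtree_refl _ v) nz_vc) _.
    by rewrite dv dr.
  exact: graver_support_subtree gS dr nz_gc0 nz_rc0 c nz_gc.
exists 0; split=> [c||s s_conf s_ker _]; rewrite ?mxE ?normr0 ?mul0mx //.
apply: layer_ker => // v dv; apply: mulmx_conformal_eq0 s_conf _ => c; rewrite mxE => nz_vc.
apply/eqP/negPn/negP => nz_gc; case/existsP: quiet; exists v.
by rewrite /loud dv eqxx; apply/existsP; exists c; rewrite nz_gc.
Qed.

(* If the decomposition of g into Graver elements for the deeper rows were too long, the
   Steinitz lemma would give a proper conformal sub-sum killed by w, hence by all rows of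
   depth >= j, contradicting the minimality of g. *)
Lemma graver_decomposition_size j g (L : seq 'cV[int]_p) B : graver N (below j) g ->
  (forall h, h \in L -> [/\ h != 0, in_ker N (below j.+1) h, in_orthant g h & (norm1 h <= B)%N]) ->
  \sum_(h <- L) h = g -> (size L <= (D * B).*2.+1)%N.
Proof.
move=> gS L_ok sumL; have [_ _ min_g] := gS.
rewrite leqNgt; apply/negP => size_L.
have [w [wD wg w_ker]] := graver_layer_row gS.
pose wt (h : 'cV[int]_p) := (w *m h) 0 0.
have wtK h : h \in L -> `|wt h| <= (D * B)%N%:Z.
  move=> hL; have [_ _ _ hB] := L_ok h hL.
  by apply: le_trans (norm_mulmx_le h wD) _; rewrite lez_nat leq_mul2l hB orbT.
have wt_sum : \sum_(h <- L) wt h = 0.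
  by rewrite -summxE -mulmx_sumr sumL wg mxE.
have [B' [C [L_BC nz_B' nz_C sumB']]] := zero_sum_split wtK wt_sum size_L.
have BC_ok h : h \in B' ++ C -> [/\ h != 0, in_ker N (below j.+1) h & in_orthant g h].
  by rewrite -(perm_mem L_BC) => /L_ok[].
have B'_ok h : h \in B' -> [/\ h != 0, in_ker N (below j.+1) h & in_orthant g h].
  by move=> hB'; apply: BC_ok; rewrite mem_cat hB'.
have C_ok h : h \in C -> [/\ h != 0, in_ker N (below j.+1) h & in_orthant g h].
  by move=> hC; apply: BC_ok; rewrite mem_cat hC orbT.
have orth_B' h : h \in B' -> in_orthant g h by case/B'_ok.
have orth_C h : h \in C -> in_orthant g h by case/C_ok.
set s := \sum_(h <- B') h.
have sum_BC : s + \sum_(h <- C) h = g by rewrite -big_cat -(perm_big _ L_BC).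
have g_s : g - s = \sum_(h <- C) h by rewrite -sum_BC addrAC subrr add0r.
have s_conf : conformal s g by split; [|rewrite g_s]; apply: in_orthant_sum.
have s_ker : in_ker N (below j.+1) s by apply: in_ker_sum => h /B'_ok[].
have ws : w *m s = 0.
  by apply/matrixP => i k; rewrite !ord1 mulmx_sumr summxE [RHS]mxE; apply: sumB'.
have [h hB'] : exists h, h \in B' by case: (B') nz_B' => // h ? _; exists h; rewrite mem_head.
have nz_s : s != 0.
  by case/B'_ok: (hB') => nz_h _ _; apply: sum_in_orthant_neq0 orth_B' hB' nz_h.
have [h' hC] : exists h, h \in C by case: (C) nz_C => // h' ? _; exists h'; rewrite mem_head.
have [nz_h' _ _] := C_ok h' hC.
have := sum_in_orthant_neq0 orth_C hC nz_h'.
by rewrite -g_s (min_g s s_conf (w_ker s s_conf s_ker ws) nz_s) subrr eqxx.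
Qed.

Lemma norm1_graver_below t j g : (forall v, (depth F v < j + t)%N) ->
  graver N (below j) g -> (norm1 g <= graver_bound D t)%N.
Proof.
elim: t j g => [|t IH] j g depth_lt gS.
  rewrite (norm1_graver_no_rows _ gS) // => v.
  by rewrite /below -ltnNge -[j]addn0 depth_lt.
have [_ Sg _] := gS.
have [L [L_ok sumL]] := graver_decomposition (in_ker_subset (fun v => @ltnW j (depth F v)) Sg).
have L_ok' h : h \in L ->
    [/\ h != 0, in_ker N (below j.+1) h, in_orthant g h & (norm1 h <= graver_bound D t)%N].
  move=> hL; have [hS gh] := L_ok h hL; have [nz_h h_ker _] := hS.
  by split=> //; apply: IH hS => v; rewrite addSnnS.
rewrite -sumL (norm1_sum (fun h hL => (L_ok h hL).2)).
apply: (@leq_trans (size L * graver_bound D t)); last first.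
  by rewrite leq_mul2r (graver_decomposition_size gS L_ok' sumL) orbT.
rewrite -sum1_size big_distrl /= !big_seq; apply: leq_sum => h /L_ok'[_ _ _].
by rewrite mul1n.
Qed.
End TreeGraver.

Lemma dvdz_denq_mul (q : rat) (a b : int) : b%:~R * q = a%:~R -> (denq q %| b)%Z.
Proof.
move=> bq_a; have coprime_qd : coprimez (denq q) (numq q).
  by rewrite coprimezE coprime_sym coprime_num_den.
rewrite -(Gauss_dvdzr _ coprime_qd); apply/dvdzP; exists a.
by apply: (@intr_inj rat); rewrite !intrM numqE mulrAC [q * _]mulrC bq_a.
Qed.

Lemma scale_rat_col_to_int n (x : 'cV[rat]_n) :
  exists2 d : int, d != 0 & exists y : 'cV[int]_n, map_mx intr y = d%:~R *: x.
Proof.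
pose q i := x i 0; pose d := \prod_i denq (q i).
have den_d i : (denq (q i) %| d)%Z by rewrite /d (bigD1 i) //= dvdz_mulr.
exists d; first by apply/prodf_neq0 => i _; apply: denq_neq0.
exists (\col_i (numq (q i) * divz d (denq (q i)))).
apply/matrixP => i k; rewrite !ord1 !mxE -/(q i).
set e := divz d (denq (q i)); rewrite -(divzK (den_d i)) -/e.
by rewrite !intrM numqE; ring.
Qed.

Section AugmentedBasis.
Variables (m : nat) (M : 'M[int]_m) (j : 'I_m).
Local Notation Mq := (map_mx (intr : int -> rat) M).
Hypothesis Mq_unit : Mq \in unitmx.

Lemma kernel_augment (g : 'cV[int]_(m + 1)) : augment M j *m g = 0 ->
  map_mx intr (usubmx g) = - (dsubmx g 0 0)%:~R *: col j (invmx Mq).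
Proof.
move=> Ng; have {Ng} : M *m usubmx g + dsubmx g 0 0 *: delta_mx j 0 = 0.
  by rewrite -mul_mx_scalar -mx11_scalar -mul_row_col vsubmxK.
move=> /(congr1 (map_mx (intr : int -> rat))).
rewrite map_mx0 raddfD /= map_mxM map_mxZ map_delta_mx => /eqP; rewrite addr_eq0 => /eqP.
move=> /(congr1 (mulmx (invmx Mq))); rewrite mulKmx // => ->.
by rewrite mulmxN -scalemxAr colE scaleNr.
Qed.

Lemma exists_kernel_augment :
  exists2 z : 'cV[int]_(m + 1), z != 0 & augment M j *m z = 0.
Proof.
have [d nz_d [y y_E]] := scale_rat_col_to_int (col j (invmx Mq)).
exists (col_mx y (- d)%:M).
  apply: contraNneq nz_d => /matrixP/(_ (rshift m 0) 0).
  by rewrite col_mxEd !mxE eqxx mulr1n => /eqP; rewrite oppr_eq0.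
apply/matrixP => v k; apply: (@intr_inj rat).
have : map_mx (intr : int -> rat) (augment M j *m col_mx y (- d)%:M) = 0.
  rewrite map_mxM map_row_mx map_col_mx y_E map_delta_mx map_scalar_mx mul_row_col.
  by rewrite -scalemxAr colE mulmxA mulmxV // mul1mx mul_mx_scalar rmorphN scaleNr subrr.
by move/matrixP/(_ v k); rewrite !mxE.
Qed.

Lemma denq_invmx_le (g : 'cV[int]_(m + 1)) i : augment M j *m g = 0 -> g != 0 ->
  leq (absz (denq (invmx Mq i j))) (absz (dsubmx g 0 0)).
Proof.
move=> Ng nz_g; have gu_E := kernel_augment Ng.
have nz_b : dsubmx g 0 0 != 0.
  apply: contraNneq nz_g => b0.
  have gd0 : dsubmx g = 0 by apply/matrixP => k l; rewrite !ord1 b0 mxE.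
  have gu0 : usubmx g = 0.
    apply/matrixP => k l; move/matrixP/(_ k l)/eqP: gu_E.
    by rewrite b0 mulr0z oppr0 scale0r !mxE intr_eq0 => /eqP.
  by rewrite -[g]vsubmxK gu0 gd0 col_mx0.
apply: dvdn_leq; first by rewrite absz_gt0.
apply: (@dvdz_denq_mul _ (- usubmx g i 0)).
move/matrixP/(_ i 0): gu_E; rewrite !mxE intrN => ->.
by rewrite mulNr opprK.
Qed.
End AugmentedBasis.

Theorem corollary3 :
  exists g : nat -> nat -> nat,
    forall (m n : nat) (A : 'M[int]_(m, n)) (F : rtree m) (f : 'I_m -> 'I_n),
      td_decomposition_dual A F ->
      injective f ->
      map_mx (intr : int -> rat) (colsub f A) \in unitmx ->
      (fr (invmx (map_mx (intr : int -> rat) (colsub f A)))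
         <= g (height F) (maxnorm A))%N.
Proof.
exists (fun h a => graver_bound (maxn a 1) h).
move=> m n A F f [[F_acyclic _] GD_in_cl] _ M_unit.
apply/bigmax_leqP => i _; apply/bigmax_leqP => j _.
pose N := augment (colsub f A) j.
have N_dual_in_cl v v' : dual_adj N v v' -> cl_adj F v v'.
  by move/dual_adj_augment/dual_adj_colsub; apply: GD_in_cl.
have N_bounded : (maxnorm N <= maxn (maxnorm A) 1)%N.
  apply: leq_trans (maxnorm_augment _ _) _.
  by rewrite geq_max leq_maxr (leq_trans (maxnorm_colsub _ _)) ?leq_maxl.
have all_rows v : below F 0 v by [].
have [z nz_z Nz] := exists_kernel_augment j M_unit.
have [g gS _] := exists_graver_conformal nz_z (proj2 (in_ker_all N z all_rows) Nz).
have [nz_g g_ker _] := gS.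
apply: leq_trans (denq_invmx_le M_unit i (proj1 (in_ker_all N g all_rows) g_ker) nz_g) _.
rewrite mxE; apply: leq_trans (leq_abs_norm1 g _) _.
by apply: (norm1_graver_below F_acyclic N_dual_in_cl N_bounded _ gS) => v; apply: leq_bigmax.
Qed.
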